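(* (Expression Safety.) Let $\Gamma$ be a Bundl context, $e$ a Bundl expression, $\tau$ a type, $\pi,\pi'$ perspectives, $p\in\mathbb{N}$, and $\eta,\sigma,\Sigma$ local, shared and global memories. Suppose that $\Gamma \vdash^{\pi} e : \tau$, that $\Gamma \vdash \eta,\sigma,\Sigma$, that $\pi \vdash p$, and that $\pi' \leq \pi$. Suppose moreover that all array accesses are in bounds: for every subexpression of $e$ of the form $e_1[e_2]$ and all values, if $\eta,\sigma,\Sigma \vdash^{\pi}_{\pi'} e_1 \Downarrow \langle l, n\rangle$ and $\eta,\sigma,\Sigma \vdash^{\pi}_{\pi'} e_2 \Downarrow i$, then $0 \le i < n$. Then there exists a value $v$ such that $\eta,\sigma,\Sigma \vdash^{\pi}_{\pi'} e \Downarrow v$ and $\eta,\sigma,\Sigma \vdash v : \tau$.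
   Context: Bundl is a core calculus parameterized by fixed positive integers $T$ (threads per block) and $B$ (blocks per grid). Levels and perspectives. Hierarchy levels are $h \in \{\mathrm{Thread},\mathrm{Block},\mathrm{Grid}\}$ with $\mathrm{Thread}\le\mathrm{Block}\le\mathrm{Grid}$. Memory kinds are $l\in\{\mathrm{Local},\mathrm{Shared},\mathrm{Global}\}$. A perspective is a pair $\pi=(h,n)$ with $h$ a level and $n\in\mathbb{N}$. Order: $(h_1,n_1)\le(h_2,n_2)$ iff $n_1$ divides $n_2$ and $h_1\le h_2$; $\pi<\pi''$ means $\pi\le\pi''$ and $\pi\neq\pi''$. Level ratios: $\mathrm{Grid}/\mathrm{Block}=B$, $\mathrm{Block}/\mathrm{Thread}=T$ (with $h/h=1$ and $\mathrm{Grid}/\mathrm{Thread}=BT$), and perspective division is $(h_1,n_1)/(h_2,n_2)=((h_1/h_2)\cdot n_1)/n_2$. For $\pi=(h,n)$ and $p\in\mathbb{N}$, $\pi\vdash p$ means $p<n$. Types and contexts. Base types $\beta ::= \mathrm{bool}\mid\mathrm{int}\mid\mathrm{float}$; types $\tau ::= \beta \mid \beta[]^{l} \mid \mathrm{Fun}(\Gamma',\pi,m) \mid \mathrm{async}\ \tau$ (function types carry a parameter context, a perspective and a memory bound). A context $\Gamma$ is a finite list of bindings $x :^{\pi}\tau$ (variable $x$ of type $\tau$ living at perspective $\pi$). Expressions: $e ::= x \mid n \mid f \mid b \mid \mathrm{partition\_id} \mid e_1[e_2] \mid e_1\ \mathrm{bop}\ e_2 \mid e_1\ \mathrm{cmp}\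 e_2$, with integer literals $n$, float literals $f$, boolean literals $b$; $\mathrm{bop}$ ranges over fixed total binary operations $\mathbb{Z}\times\mathbb{Z}\to\mathbb{Z}$ and $\mathrm{cmp}$ over fixed total comparisons $\mathbb{Z}\times\mathbb{Z}\to\{\mathrm{true},\mathrm{false}\}$. Expression typing $\Gamma\vdash^{\pi} e:\tau$ is the least relation closed under: (T-Var) if $x:^{\pi}\tau\in\Gamma$ then $\Gamma\vdash^{\pi}x:\tau$; integer, float and boolean literals have types int, float, bool at every $\pi$; (T-Partition-Id) if $\pi<(\mathrm{Grid},1)$ then $\Gamma\vdash^{\pi}\mathrm{partition\_id}:\mathrm{int}$; (T-Arr-Access) if $\Gamma\vdash^{\pi''}e_1:\tau[]^{l}$, $\Gamma\vdash^{\pi}e_2:\mathrm{int}$, $l\in\{\mathrm{Global},\mathrm{Local}\}$ and $\pi\le\pi''$, then $\Gamma\vdash^{\pi}e_1[e_2]:\tau$; (T-Arr-Access-Shared) if $\Gamma\vdash^{\pi''}e_1:\tau[]^{\mathrm{Shared}}$, $\Gamma\vdash^{\pi}e_2:\mathrm{int}$, $\pi\le(\mathrm{Block},1)$ and $\pi\le\pi''$, then $\Gamma\vdash^{\pi}e_1[e_2]:\tau$; (T-Bop) if $\Gamma\vdash^{\pi}e_1:\mathrm{int}$ and $\Gamma\vdash^{\pi}e_2:\mathrm{int}$ then $\Gamma\vdash^{\pi}e_1\ \mathrm{bop}\ e_2:\mathrm{int}$; (T-Cmp) same premises give $\Gamma\vdash^{\pi}e_1\ \mathrm{cmp}\ e_2:\mathrm{bool}$.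 Memories and values. Values are integers, floats, booleans, array references $\langle x,n\rangle$ (base location $x$, length $n$), and function closures. Local memory $\eta$, shared memory $\sigma$ and global memory $\Sigma$ are finite maps from names to values, each entry annotated with a perspective ($x\mapsto^{\pi}v$); the three have disjoint domains, and names are identified with integer locations so that $x+i$ is a location. $\mathrm{get}(\eta,\sigma,\Sigma,x)$ is the value stored at $x$ in whichever of the three memories contains $x$. Value typing $\eta,\sigma,\Sigma\vdash v:\tau$: integers have type int, booleans bool, floats float; $\langle x,n\rangle$ has type $\beta[]^{l}$ iff $\eta,\sigma,\Sigma\vdash \mathrm{get}(\eta,\sigma,\Sigma,x+i):\beta$ for all $i<n$; a closure has a function type according to a fixed given relation (defined via the typing of the closure's body statement). Environment typing $\Gamma\vdash\eta,\sigma,\Sigma$ holds iff for every binding $x:^{\pi}\tau$ in $\Gamma$: if $\tau\in\{\mathrm{int},\mathrm{bool},\mathrm{float}\}$ or $\tau=\beta[]^{\mathrm{Local}}$ then $\eta$ maps $x\mapsto^{\pi}v$ with $\eta,\sigma,\Sigma\vdash v:\tau$; if $\tau=\beta[]^{\mathrm{Shared}}$ then $\sigma$ maps $x\mapsto^{\pi}v$ with $v$ well-typed at $\tau$; if $\tau=\beta[]^{\mathrm{Global}}$ or $\tau$ is a function type then $\Sigma$ maps $x\mapsto^{\pi}v$ with $v$ well-typed at $\tau$; and no binding has a type of the form $\mathrm{async}\ \tau$. Evaluation $\eta,\sigma,\Sigma\vdash^{\pi}_{\pi'}e\Downarrow v$ ($\pi$ the ambient perspective, $\pi'$ the target perspective)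 is the least relation with: (E-Partition-Id) if $\pi<(\mathrm{Grid},1)$ and $\pi'\le\pi$ then $\mathrm{partition\_id}\Downarrow \pi/\pi'-1$; (E-Var) $x\Downarrow\mathrm{get}(\eta,\sigma,\Sigma,x)$; (E-Arr-Access) if $e_1\Downarrow\langle l,n\rangle$, $e_2\Downarrow i$, $i<n$ and $\pi'\le\pi$ then $e_1[e_2]\Downarrow\mathrm{get}(\eta,\sigma,\Sigma,l+i)$; integer, float and boolean literals evaluate to themselves; (E-Bop/E-Cmp) if $e_1\Downarrow v_1$ and $e_2\Downarrow v_2$ then $e_1\ \mathrm{bop}\ e_2\Downarrow v_1\ \mathrm{bop}\ v_2$ and $e_1\ \mathrm{cmp}\ e_2\Downarrow v_1\ \mathrm{cmp}\ v_2$ (all subevaluations at the same $\pi,\pi'$). *)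

From Stdlib Require Import ZArith QArith List.
Import ListNotations.

Inductive level := Thread | Block | Grid.
Inductive memkind := Local | Shared | Global.

Definition persp : Type := (level * nat)%type.

Definition lev_rank (h : level) : nat :=
  match h with Thread => 0 | Block => 1 | Grid => 2 end.
Definition lev_le (h1 h2 : level) : Prop := (lev_rank h1 <= lev_rank h2)%nat.

Definition ple (p1 p2 : persp) : Prop :=
  Nat.divide (snd p1) (snd p2) /\ lev_le (fst p1) (fst p2).
Definition plt (p1 p2 : persp) : Prop := ple p1 p2 /\ p1 <> p2.

(* level ratios h1/h2 (only meaningful for h2 <= h1; 0 otherwise) *)
Definition lratio (T B : nat) (h1 h2 : level) : nat :=
  match h1, h2 with
  | Thread, Thread | Block, Block | Grid, Grid => 1
  | Grid, Block => B
  | Block, Thread => T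
  | Grid, Thread => B * T
  | _, _ => 0
  end.

Definition pdiv (T B : nat) (p1 p2 : persp) : nat :=
  (lratio T B (fst p1) (fst p2) * snd p1) / snd p2.

Definition pvalid (pi : persp) (p : nat) : Prop := (p < snd pi)%nat.

Inductive base := TBool | TInt | TFloat.

Inductive ty :=
| TBase : base -> ty
| TArr : base -> memkind -> ty
| TFun : list (Z * persp * ty) -> persp -> nat -> ty
| TAsync : ty -> ty.

(* context: list of bindings x :^pi tau; names are integer locations *)
Definition ctx : Type := list (Z * persp * ty).

Inductive expr :=
| EVar : Z -> expr
| EInt : Z -> expr
| EFloat : Q -> expr
| EBool : bool -> expr
| EPartId : expr
| EIdx : expr -> expr -> expr
| EBop : (Z -> Z -> Z) -> expr -> expr -> expr
| ECmp : (Z -> Z -> bool) -> expr -> expr -> expr.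

Inductive has_type (G : ctx) : persp -> expr -> ty -> Prop :=
| T_Var : forall pi x t, In (x, pi, t) G -> has_type G pi (EVar x) t
| T_Int : forall pi n, has_type G pi (EInt n) (TBase TInt)
| T_Float : forall pi f, has_type G pi (EFloat f) (TBase TFloat)
| T_Bool : forall pi b, has_type G pi (EBool b) (TBase TBool)
| T_PartId : forall pi, plt pi (Grid, 1%nat) -> has_type G pi EPartId (TBase TInt)
| T_ArrAccess : forall pi pi'' e1 e2 b l,
    has_type G pi'' e1 (TArr b l) -> has_type G pi e2 (TBase TInt) ->
    (l = Global \/ l = Local) -> ple pi pi'' ->
    has_type G pi (EIdx e1 e2) (TBase b)
| T_ArrAccessShared : forall pi pi'' e1 e2 b,
    has_type G pi'' e1 (TArr b Shared) -> has_type G pi e2 (TBase TInt) ->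
    ple pi (Block, 1%nat) -> ple pi pi'' ->
    has_type G pi (EIdx e1 e2) (TBase b)
| T_Bop : forall pi op e1 e2,
    has_type G pi e1 (TBase TInt) -> has_type G pi e2 (TBase TInt) ->
    has_type G pi (EBop op e1 e2) (TBase TInt)
| T_Cmp : forall pi c e1 e2,
    has_type G pi e1 (TBase TInt) -> has_type G pi e2 (TBase TInt) ->
    has_type G pi (ECmp c e1 e2) (TBase TBool).

Inductive value (Clo : Type) :=
| VInt : Z -> value Clo
| VFloat : Q -> value Clo
| VBool : bool -> value Clo
| VRef : Z -> nat -> value Clo
| VClo : Clo -> value Clo.
Arguments VInt {Clo}. Arguments VFloat {Clo}. Arguments VBool {Clo}.
Arguments VRef {Clo}. Arguments VClo {Clo}.

Definition mem (Clo : Type) : Type := Z -> option (persp * value Clo).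

Definition disjoint3 {Clo} (eta sigma Sigma : mem Clo) : Prop :=
  forall x,
    (eta x = None \/ sigma x = None) /\
    (eta x = None \/ Sigma x = None) /\
    (sigma x = None \/ Sigma x = None).

Definition get {Clo} (eta sigma Sigma : mem Clo) (x : Z) : option (value Clo) :=
  match eta x with
  | Some (_, v) => Some v
  | None =>
    match sigma x with
    | Some (_, v) => Some v
    | None =>
      match Sigma x with
      | Some (_, v) => Some v
      | None => None
      end
    end
  end.

Inductive vtyped {Clo} (clo_ty : Clo -> ty -> Prop) (eta sigma Sigma : mem Clo)
  : value Clo -> ty -> Prop :=
| VT_Int : forall z, vtyped clo_ty eta sigma Sigma (VInt z) (TBase TInt)
| VT_Bool : forall b, vtyped clo_ty eta sigma Sigma (VBool b) (TBase TBool)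
| VT_Float : forall f, vtyped clo_ty eta sigma Sigma (VFloat f) (TBase TFloat)
| VT_Arr : forall x n b l,
    (forall i : nat, (i < n)%nat ->
       exists v, get eta sigma Sigma (x + Z.of_nat i)%Z = Some v /\
                 vtyped clo_ty eta sigma Sigma v (TBase b)) ->
    vtyped clo_ty eta sigma Sigma (VRef x n) (TArr b l)
| VT_Clo : forall c G pi m,
    clo_ty c (TFun G pi m) ->
    vtyped clo_ty eta sigma Sigma (VClo c) (TFun G pi m).

Definition env_typed {Clo} (clo_ty : Clo -> ty -> Prop) (G : ctx)
  (eta sigma Sigma : mem Clo) : Prop :=
  forall x pi t, In (x, pi, t) G ->
    match t with
    | TBase _ | TArr _ Local =>
        exists v, eta x = Some (pi, v) /\ vtyped clo_ty eta sigma Sigma v t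
    | TArr _ Shared =>
        exists v, sigma x = Some (pi, v) /\ vtyped clo_ty eta sigma Sigma v t
    | TArr _ Global | TFun _ _ _ =>
        exists v, Sigma x = Some (pi, v) /\ vtyped clo_ty eta sigma Sigma v t
    | TAsync _ => False
    end.

Inductive eval {Clo} (T B : nat) (eta sigma Sigma : mem Clo) (pi pi' : persp)
  : expr -> value Clo -> Prop :=
| E_PartId : plt pi (Grid, 1%nat) -> ple pi' pi ->
    eval T B eta sigma Sigma pi pi' EPartId
         (VInt (Z.of_nat (pdiv T B pi pi') - 1)%Z)
| E_Var : forall x v, get eta sigma Sigma x = Some v ->
    eval T B eta sigma Sigma pi pi' (EVar x) v
| E_ArrAccess : forall e1 e2 l n i v,
    eval T B eta sigma Sigma pi pi' e1 (VRef l n) ->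
    eval T B eta sigma Sigma pi pi' e2 (VInt i) ->
    (i < Z.of_nat n)%Z -> ple pi' pi ->
    get eta sigma Sigma (l + i)%Z = Some v ->
    eval T B eta sigma Sigma pi pi' (EIdx e1 e2) v
| E_Int : forall n, eval T B eta sigma Sigma pi pi' (EInt n) (VInt n)
| E_Float : forall f, eval T B eta sigma Sigma pi pi' (EFloat f) (VFloat f)
| E_Bool : forall b, eval T B eta sigma Sigma pi pi' (EBool b) (VBool b)
| E_Bop : forall op e1 e2 v1 v2,
    eval T B eta sigma Sigma pi pi' e1 (VInt v1) ->
    eval T B eta sigma Sigma pi pi' e2 (VInt v2) ->
    eval T B eta sigma Sigma pi pi' (EBop op e1 e2) (VInt (op v1 v2))
| E_Cmp : forall c e1 e2 v1 v2,
    eval T B eta sigma Sigma pi pi' e1 (VInt v1) ->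
    eval T B eta sigma Sigma pi pi' e2 (VInt v2) ->
    eval T B eta sigma Sigma pi pi' (ECmp c e1 e2) (VBool (c v1 v2)).

Inductive subexpr : expr -> expr -> Prop :=
| SE_refl : forall e, subexpr e e
| SE_Idx1 : forall e e1 e2, subexpr e e1 -> subexpr e (EIdx e1 e2)
| SE_Idx2 : forall e e1 e2, subexpr e e2 -> subexpr e (EIdx e1 e2)
| SE_Bop1 : forall e op e1 e2, subexpr e e1 -> subexpr e (EBop op e1 e2)
| SE_Bop2 : forall e op e1 e2, subexpr e e2 -> subexpr e (EBop op e1 e2)
| SE_Cmp1 : forall e c e1 e2, subexpr e e1 -> subexpr e (ECmp c e1 e2)
| SE_Cmp2 : forall e c e1 e2, subexpr e e2 -> subexpr e (ECmp c e1 e2).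

Definition in_bounds {Clo} (T B : nat) (eta sigma Sigma : mem Clo)
  (pi pi' : persp) (e : expr) : Prop :=
  forall e1 e2, subexpr (EIdx e1 e2) e ->
  forall l n i,
    eval T B eta sigma Sigma pi pi' e1 (VRef l n) ->
    eval T B eta sigma Sigma pi pi' e2 (VInt i) ->
    (0 <= i /\ i < Z.of_nat n)%Z.

(** Typing at a perspective guarantees evaluation at every smaller one: the
    only perspective-sensitive rules (partition_id and array access) need
    just [pi < (Grid, 1)] resp. [pi' <= pi], and both hypotheses are
    inherited downwards.  A typed environment makes every variable lookup
    succeed with a value of its declared type, the in-bounds hypothesis
    makes every array access hit a typed cell, and the remaining cases
    follow from the canonical forms of integer and array values. *)

From Stdlib Require Import ZArith QArith List Lia.

Local Hint Constructors subexpr : core.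

Lemma ple_refl (a : persp) : ple a a.
Proof. split; [apply Nat.divide_refl | unfold lev_le; lia]. Qed.

Lemma ple_trans (a b c : persp) : ple a b -> ple b c -> ple a c.
Proof.
  intros [Hab_div Hab_lev] [Hbc_div Hbc_lev].
  split; [eapply Nat.divide_trans; eauto | unfold lev_le in *; lia].
Qed.

Lemma plt_grid_ple (a b : persp) :
  ple a b -> plt b (Grid, 1%nat) -> plt a (Grid, 1%nat).
Proof.
  intros Hab [Hb Hb_ne]. split; [eapply ple_trans; eauto |].
  intros ->. apply Hb_ne.
  destruct b as [h n], Hab as [Hdiv_n Hlev_h], Hb as [Hdiv_1 _]; cbn in *.
  assert (n = 1%nat) as -> by (apply Nat.divide_antisym; assumption).
  destruct h; unfold lev_le in Hlev_h; cbn in Hlev_h; [lia | lia | reflexivity].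
Qed.

Lemma subexpr_trans (a b c : expr) : subexpr a b -> subexpr b c -> subexpr a c.
Proof. intros Hab Hbc; induction Hbc; auto. Qed.

Section ExpressionSafety.

Variables (T B : nat) (Clo : Type) (clo_ty : Clo -> ty -> Prop).
Variables (eta sigma Sigma : mem Clo) (pi' : persp).

Notation typed v t := (vtyped clo_ty eta sigma Sigma v t).
Notation evals pi e v := (eval T B eta sigma Sigma pi pi' e v).
Notation in_bounds_at pi e := (in_bounds T B eta sigma Sigma pi pi' e).

Lemma in_bounds_subexpr (pi : persp) (e e' : expr) :
  subexpr e' e -> in_bounds_at pi e -> in_bounds_at pi e'.
Proof. intros Hsub Hib e1 e2 Hsub12; apply Hib; eapply subexpr_trans; eauto. Qed.

(* Disjointness matters because [get] looks in [eta], then [sigma], then [Sigma]. *)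
Lemma get_env_typed (G : ctx) (x : Z) (pi : persp) (t : ty) :
  disjoint3 eta sigma Sigma -> env_typed clo_ty G eta sigma Sigma ->
  In (x, pi, t) G -> exists v, get eta sigma Sigma x = Some v /\ typed v t.
Proof.
  intros Hdisj Henv Hin.
  destruct (Hdisj x) as (Heta_sigma & Heta_Sigma & Hsigma_Sigma).
  specialize (Henv _ _ _ Hin); unfold get.
  destruct t as [b | b [] | Gf pf m | t]; try contradiction;
    destruct Henv as (v & Hx & Hv); exists v; split; try assumption;
    rewrite Hx in *;
    repeat match goal with
           | H : Some _ = None \/ _ |- _ => destruct H as [H | H]; [discriminate |]
           | H : _ \/ Some _ = None |- _ => destruct H as [H | H]; [| discriminate]
           | H : ?m x = None |- _ => rewrite H; clear H
           end;
    rewrite ?Hx; reflexivity.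
Qed.

Lemma typed_int_inv (v : value Clo) : typed v (TBase TInt) -> exists z, v = VInt z.
Proof. inversion 1; eauto. Qed.

Lemma eval_idx_typed (pi : persp) (e1 e2 : expr) (a j : value Clo) (b : base)
    (l : memkind) :
  ple pi' pi -> in_bounds_at pi (EIdx e1 e2) ->
  evals pi e1 a -> typed a (TArr b l) ->
  evals pi e2 j -> typed j (TBase TInt) ->
  exists v, evals pi (EIdx e1 e2) v /\ typed v (TBase b).
Proof.
  intros Hpi' Hib He1 Ha He2 Hj.
  inversion Ha as [| | | x n ? ? Hcells | ]; subst.
  destruct (typed_int_inv _ Hj) as [i ->].
  destruct (Hib e1 e2 (SE_refl _) x n i He1 He2) as [Hi_ge0 Hi_lt].
  destruct (Hcells (Z.to_nat i)) as (v & Hget & Hv); [lia |].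
  rewrite Z2Nat.id in Hget by assumption.
  exists v; split; [econstructor; eauto | assumption].
Qed.

(* The claim is made for every [pi <= pi0], not just [pi0]: rule T-Arr-Access
   types the array at a perspective above the one of the access. *)
Lemma eval_safe_below (G : ctx) (pi0 : persp) (e : expr) (t : ty) :
  disjoint3 eta sigma Sigma -> env_typed clo_ty G eta sigma Sigma ->
  has_type G pi0 e t ->
  forall pi, ple pi pi0 -> ple pi' pi -> in_bounds_at pi e ->
  exists v, evals pi e v /\ typed v t.
Proof.
  intros Hdisj Henv Ht.
  induction Ht as [pi0 x t Hin | pi0 n | pi0 f | pi0 b | pi0 Hgrid
                  | pi0 pi'' e1 e2 b l _ IH1 _ IH2 _ Hpi0
                  | pi0 pi'' e1 e2 b _ IH1 _ IH2 _ Hpi0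
                  | pi0 op e1 e2 _ IH1 _ IH2 | pi0 c e1 e2 _ IH1 _ IH2];
    intros pi Hpi Hpi' Hib.
  - destruct (get_env_typed G x pi0 t Hdisj Henv Hin) as (v & Hget & Hv).
    exists v; split; [constructor |]; assumption.
  - eexists; split; constructor.
  - eexists; split; constructor.
  - eexists; split; constructor.
  - eexists; split; [apply E_PartId; eauto using plt_grid_ple | constructor].
  - destruct (IH1 pi) as (a & He1 & Ha); eauto using ple_trans, in_bounds_subexpr.
    destruct (IH2 pi) as (j & He2 & Hj); eauto using in_bounds_subexpr.
    eapply eval_idx_typed; eauto.
  - destruct (IH1 pi) as (a & He1 & Ha); eauto using ple_trans, in_bounds_subexpr.
    destruct (IH2 pi) as (j & He2 & Hj); eauto using in_bounds_subexpr.
    eapply eval_idx_typed; eauto.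
  - destruct (IH1 pi) as (v1 & He1 & Hv1); eauto using in_bounds_subexpr.
    destruct (IH2 pi) as (v2 & He2 & Hv2); eauto using in_bounds_subexpr.
    destruct (typed_int_inv _ Hv1) as [z1 ->], (typed_int_inv _ Hv2) as [z2 ->].
    eexists; split; [econstructor; eauto | constructor].
  - destruct (IH1 pi) as (v1 & He1 & Hv1); eauto using in_bounds_subexpr.
    destruct (IH2 pi) as (v2 & He2 & Hv2); eauto using in_bounds_subexpr.
    destruct (typed_int_inv _ Hv1) as [z1 ->], (typed_int_inv _ Hv2) as [z2 ->].
    eexists; split; [econstructor; eauto | constructor].
Qed.

End ExpressionSafety.

Theorem lemmaA4 (T B : nat) (Clo : Type) (clo_ty : Clo -> ty -> Prop)
  (G : ctx) (e : expr) (t : ty) (pi pi' : persp) (p : nat)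
  (eta sigma Sigma : mem Clo) :
  (0 < T)%nat -> (0 < B)%nat ->
  disjoint3 eta sigma Sigma ->
  has_type G pi e t ->
  env_typed clo_ty G eta sigma Sigma ->
  pvalid pi p ->
  ple pi' pi ->
  in_bounds T B eta sigma Sigma pi pi' e ->
  exists v, eval T B eta sigma Sigma pi pi' e v /\
            vtyped clo_ty eta sigma Sigma v t.
Proof.
  intros _ _ Hdisj Ht Henv _ Hpi' Hib.
  exact (eval_safe_below T B Clo clo_ty eta sigma Sigma pi' G pi e t
           Hdisj Henv Ht pi (ple_refl pi) Hpi' Hib).
Qed.
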